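(* Let $D$ be an integral domain such that $D_M$ is a GCD domain for every maximal ideal $M$ of $D$, and suppose there is a family $\mathcal{F}$ of nonzero prime ideals of $D$ such that $D=\bigcap_{P\in\mathcal{F}}D_P$ with the intersection locally finite (every nonzero element of $D$ lies in only finitely many members of $\mathcal{F}$). If the ideal class group $Cl_d(D)$ (invertible fractional ideals modulo principal fractional ideals) is trivial, then $D$ is a GCD domain.
   Context: A GCD domain is an integral domain in which every pair of nonzero elements has a greatest common divisor, equivalently $aD\cap bD$ is principal for all nonzero $a,b$. *)

From HB Require Import structures.
From mathcomp Require Import all_boot all_order all_algebra.
From Stdlib Require List.
Set Implicit Arguments. Unset Strict Implicit. Unset Printing Implicit Defensive.
Import GRing.Theory.
Local Open Scope ring_scope.

Definition subs (T : Type) := T -> Prop.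

Section Defs.
Variable D : idomainType.
Local Notation K := {fraction D}.

Definition emb (d : D) : K := @FracField.tofrac D d.

Definition is_ideal (I : subs D) : Prop :=
  I 0 /\ (forall x y, I x -> I y -> I (x + y)) /\ (forall r x, I x -> I (r * x)).

Definition is_prime_ideal (P : subs D) : Prop :=
  is_ideal P /\ ~ P 1 /\ (forall a b, P (a * b) -> P a \/ P b).

Definition is_maximal_ideal (M : subs D) : Prop :=
  is_ideal M /\ ~ M 1 /\
  (forall J : subs D, is_ideal J -> (forall x, M x -> J x) -> J 1 \/ (forall x, J x -> M x)).

Definition nonzero_ideal (I : subs D) : Prop := exists2 x, I x & x != 0.

Definition Dsub : subs K := fun x => exists d : D, x = emb d.

Definition loc (P : subs D) : subs K :=
  fun x => exists a s : D, ~ P s /\ x = emb a / emb s.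

Definition dvd_in (T : comNzRingType) (S : subs T) (x y : T) : Prop :=
  exists2 z, S z & y = x * z.

Definition gcd_domain_on (T : comNzRingType) (S : subs T) : Prop :=
  forall a b, S a -> S b -> a != 0 -> b != 0 ->
  exists d, [/\ S d, dvd_in S d a, dvd_in S d b &
    forall c, S c -> dvd_in S c a -> dvd_in S c b -> dvd_in S c d].

Definition gcd_domain : Prop := gcd_domain_on (fun _ : D => True).

Definition locally_finite (F : subs (subs D)) : Prop :=
  forall x : D, x != 0 ->
  exists s : seq (subs D), forall P, F P -> P x ->
    exists2 Q, List.In Q s & (forall y, P y <-> Q y).

Definition fractional_ideal (I : subs K) : Prop :=
  [/\ I 0, (forall x y, I x -> I y -> I (x + y)),
      (forall (r : D) x, I x -> I (emb r * x)),
      (exists2 x, I x & x != 0) &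
      (exists2 d : D, d != 0 & forall x, I x -> Dsub (emb d * x))].

Definition ideal_prod (I J : subs K) : subs K :=
  fun x => exists s : seq (K * K),
    (forall p, List.In p s -> I p.1 /\ J p.2) /\
    x = \sum_(p <- s) (p.1 * p.2).

Definition invertible_frac (I : subs K) : Prop :=
  fractional_ideal I /\
  exists2 J, fractional_ideal J & forall x, ideal_prod I J x <-> Dsub x.

Definition principal_frac (I : subs K) : Prop :=
  exists a : K, forall x, I x <-> exists d : D, x = a * emb d.

Definition trivial_class_group : Prop :=
  forall I : subs K, invertible_frac I -> principal_frac I.

End Defs.

From HB Require Import structures.
From mathcomp Require Import all_boot all_order all_algebra.
From mathcomp Require Import boolp classical_sets.
From mathcomp Require Import ring.
Set Implicit Arguments. Unset Strict Implicit. Unset Printing Implicit Defensive.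
Import GRing.Theory.
Local Open Scope ring_scope.

(* Fix nonzero a, b in D and let I := aD \cap bD. For a maximal ideal M, D_M is
   a GCD domain, so a and b have an lcm there and I D_M is principal. Local
   finiteness of D = \bigcap_{P \in F} D_P means that membership of y in the
   colon ideal (D : I) is tested on a*b and finitely many local generators of I,
   so at every M some y \in (D : I) has y I \not\subset M; hence I (D : I) = D
   and I is invertible. As Cl_d(D) is trivial, I = lD, so l is an lcm of a and b
   in D, and ab/l is their gcd. *)

Definition is_gcd_in (T : comNzRingType) (S : subs T) (a b d : T) : Prop :=
  [/\ S d, dvd_in S d a, dvd_in S d b &
    forall c, S c -> dvd_in S c a -> dvd_in S c b -> dvd_in S c d].

Definition is_lcm_in (T : comNzRingType) (S : subs T) (a b l : T) : Prop :=
  [/\ S l, dvd_in S a l, dvd_in S b l &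
    forall i, S i -> dvd_in S a i -> dvd_in S b i -> dvd_in S l i].

Section GcdTheory.
Variables (T : idomainType) (S : subs T).
Hypothesis SM : forall x y, S x -> S y -> S (x * y).

Lemma dvd_in_mulr x y : S y -> dvd_in S x (x * y).
Proof. by exists y. Qed.

Lemma dvd_in_mull x y : S y -> dvd_in S x (y * x).
Proof. by rewrite mulrC; apply: dvd_in_mulr. Qed.

Lemma dvd_in_mul2l c x y : c != 0 -> dvd_in S (c * x) (c * y) -> dvd_in S x y.
Proof. by move=> c0 [k Sk]; rewrite -mulrA => /(mulfI c0) ->; exists k. Qed.

Lemma gauss_dvd_in a b u : gcd_domain_on S -> S a -> S b -> S u ->
  a != 0 -> b != 0 ->
  (forall f, S f -> dvd_in S f a -> dvd_in S f b -> dvd_in S f 1) ->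
  dvd_in S b (a * u) -> dvd_in S b u.
Proof.
move=> G Sa Sb Su a0 b0 coprime_ab b_au.
(* gcd(au, bu) is u times a common divisor of a and b, i.e. an associate of u. *)
have [u0|u0] := eqVneq u 0.
  case: b_au => z Sz; rewrite u0 mulr0 => /esym /eqP; rewrite mulf_eq0 (negPf b0) /=.
  by move=> /eqP z0; exists z; rewrite // z0 mulr0.
have [e [Se e_au e_bu emax]] := G (a * u) (b * u) (SM Sa Su) (SM Sb Su)
  (mulf_neq0 a0 u0) (mulf_neq0 b0 u0).
have [f Sf def_e] : dvd_in S u e by apply: emax => //; apply: dvd_in_mull.
have [h Sh fh] : dvd_in S f 1.
  by apply: coprime_ab => //; apply: (@dvd_in_mul2l u); rewrite // -def_e mulrC.
have [m Sm def_e'] : dvd_in S b e by apply: emax => //; apply: dvd_in_mulr.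
by exists (m * h); [exact: SM | rewrite mulrA -def_e' def_e -mulrA -fh mulr1].
Qed.

Lemma lcm_in_exists a b : gcd_domain_on S -> S a -> S b -> a != 0 -> b != 0 ->
  exists2 l, l != 0 & is_lcm_in S a b l.
Proof.
move=> G Sa Sb a0 b0.
have [g [Sg [a' Sa' def_a] [b' Sb' def_b] gmax]] := G a b Sa Sb a0 b0.
have [g0 a'0] : g != 0 /\ a' != 0 by apply/andP; rewrite -negb_or -mulf_eq0 -def_a.
have b'0 : b' != 0 by apply: contraNneq b0 => b'0; rewrite def_b b'0 mulr0.
have coprime_ab' f : S f -> dvd_in S f a' -> dvd_in S f b' -> dvd_in S f 1.
  move=> Sf [k Sk ek] [k' Sk' ek'].
  have [h Sh gh] : dvd_in S (g * f) g.
    apply: gmax; first exact: SM.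
      by exists k; rewrite // def_a ek mulrA.
    by exists k'; rewrite // def_b ek' mulrA.
  by exists h => //; apply: (mulfI g0); rewrite mulr1 mulrA -gh.
exists (a * b'); first exact: mulf_neq0.
split; [exact: SM | exact: dvd_in_mulr |
        by exists a'; rewrite // def_a def_b mulrAC |].
move=> i Si [u Su def_i] [v Sv def_i'].
have [w Sw def_u] : dvd_in S b' u.
  apply: (gauss_dvd_in G Sa' Sb' Su a'0 b'0 coprime_ab').
  by exists v => //; apply: (mulfI g0); rewrite !mulrA -def_a -def_b -def_i -def_i'.
by exists w; rewrite // def_i def_u mulrA.
Qed.

Lemma gcd_of_lcm a b l : S a -> S b -> a != 0 -> b != 0 ->
  is_lcm_in S a b l -> exists d, is_gcd_in S a b d.
Proof.
move=> Sa Sb a0 b0 [Sl [x Sx def_l] [y Sy def_l'] lmin].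
have [d Sd def_ab] : dvd_in S l (a * b).
  by apply: lmin; [exact: SM | exact: dvd_in_mulr | exact: dvd_in_mull].
exists d; split=> //.
- exists y => //; apply: (mulfI b0).
  by rewrite mulrCA -def_l' [RHS]mulrC -def_ab mulrC.
- by exists x => //; apply: (mulfI a0); rewrite mulrCA -def_l [RHS]mulrC -def_ab.
move=> c Sc [a1 Sa1 def_a] [b1 Sb1 def_b].
have [h Sh def_m] : dvd_in S l (c * a1 * b1).
  apply: lmin; first by apply: SM => //; apply: SM.
    by exists b1; rewrite // def_a.
  by exists a1; rewrite // def_b mulrAC.
have l0 : l != 0 by apply: contraNneq (mulf_neq0 a0 b0) => l0; rewrite def_ab l0 mul0r.
exists h => //; apply: (mulfI l0).
by rewrite -def_ab mulrCA -def_m def_a def_b [LHS]mulrCA mulrA.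
Qed.

End GcdTheory.

Section Localization.
Variable D : idomainType.
Local Notation K := {fraction D}.

Lemma emb0 : emb (0 : D) = 0. Proof. exact: rmorph0. Qed.
Lemma emb1 : emb (1 : D) = 1. Proof. exact: rmorph1. Qed.
Lemma embD (x y : D) : emb (x + y) = emb x + emb y. Proof. exact: rmorphD. Qed.
Lemma embM (x y : D) : emb (x * y) = emb x * emb y. Proof. exact: rmorphM. Qed.

Lemma emb_inj : injective (@emb D).
Proof. by move=> x y /eqP; rewrite /emb tofrac_eq => /eqP. Qed.

Lemma emb_eq0 (x : D) : (emb x == 0) = (x == 0).
Proof. exact: tofrac_eq0. Qed.

Lemma Dsub_emb (d : D) : Dsub (emb d). Proof. by exists d. Qed.

Lemma Dsub_add (x y : K) : Dsub x -> Dsub y -> Dsub (x + y).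
Proof. by move=> [u ->] [v ->]; exists (u + v); rewrite embD. Qed.

Lemma Dsub_mul (x y : K) : Dsub x -> Dsub y -> Dsub (x * y).
Proof. by move=> [u ->] [v ->]; exists (u * v); rewrite embM. Qed.

Lemma Dsub_sum (I : Type) (r : seq I) (f : I -> K) :
  (forall i, List.In i r -> Dsub (f i)) -> Dsub (\sum_(i <- r) f i).
Proof.
elim: r => [|i r IHr] Hf; first by rewrite big_nil -emb0; apply: Dsub_emb.
rewrite big_cons; apply: Dsub_add; first by apply: Hf; left.
by apply: IHr => j r_j; apply: Hf; right.
Qed.

Section PrimeIdeal.
Variable P : subs D.
Hypothesis primeP : is_prime_ideal P.

Lemma prime_notinM x y : ~ P x -> ~ P y -> ~ P (x * y).
Proof. by case: primeP => _ [_ PM] Px Py /PM []. Qed.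

Lemma prime_notin_neq0 x : ~ P x -> x != 0.
Proof. by case: primeP => [[P0 _] _] Px; apply: contra_notN Px => /eqP ->. Qed.

Lemma loc_emb (d : D) : loc P (emb d).
Proof. by case: primeP => _ [P1 _]; exists d, 1; rewrite emb1 divr1. Qed.

Lemma loc_Dsub (x : K) : Dsub x -> loc P x.
Proof. by move=> [d ->]; apply: loc_emb. Qed.

Lemma loc_dvd_emb (x y : D) :
  dvd_in (fun _ : D => True) x y -> dvd_in (loc P) (emb x) (emb y).
Proof. by move=> [z _ ->]; exists (emb z); [apply: loc_emb | rewrite embM]. Qed.

Lemma loc_mul (x y : K) : loc P x -> loc P y -> loc P (x * y).
Proof.
move=> [u [s [Ps ->]]] [v [t [Pt ->]]].
by exists (u * v), (s * t); split; [exact: prime_notinM | rewrite !embM mulf_div].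
Qed.

Lemma loc_clear_denominators (zs : seq K) : (forall z, List.In z zs -> loc P z) ->
  exists2 w, ~ P w & forall z, List.In z zs -> Dsub (emb w * z).
Proof.
elim: zs => [|z zs IHzs] Hzs.
  by case: primeP => _ [P1 _]; exists 1.
have [w Pw Hw] := IHzs (fun z' zs_z' => Hzs z' (or_intror zs_z')).
have [u [s [Ps def_z]]] := Hzs z (or_introl erefl).
exists (w * s); first exact: prime_notinM.
move=> z' [<-|zs_z']; last first.
  by rewrite embM mulrAC; apply: Dsub_mul; [exact: Hw | exact: Dsub_emb].
exists (w * u); rewrite def_z !embM -mulrA [emb s * _]mulrC divfK //.
by rewrite emb_eq0 prime_notin_neq0.
Qed.

End PrimeIdeal.

Lemma loc_subset (P M : subs D) (x : K) :
  (forall y, P y -> M y) -> loc M x -> loc P x.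
Proof. by move=> PM [u [s [Ms ->]]]; exists u, s; split=> // /PM. Qed.

End Localization.

Section MaximalIdeals.
Variable D : idomainType.

Lemma maximal_ideal_prime (M : subs D) : is_maximal_ideal M -> is_prime_ideal M.
Proof.
move=> [idealM [M1 Mmax]]; split=> //; split=> // a b Mab.
have [Ma|Ma] := pselect (M a); [by left | right].
have [M0 [MD MM]] := idealM.
pose J : subs D := fun x => exists m r, M m /\ x = m + r * a.
have idealJ : is_ideal J.
  split; first by exists 0, 0; rewrite mul0r addr0.
  split=> [x y [m [r [Mm ->]]] [m' [r' [Mm' ->]]] | r0 x [m [r [Mm ->]]]].
    by exists (m + m'), (r + r'); split; [exact: MD | rewrite addrACA mulrDl].
  by exists (r0 * m), (r0 * r); split; [exact: MM | rewrite mulrDr mulrA].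
have MJ x : M x -> J x by exists x, 0; rewrite mul0r addr0.
have [[m [r [Mm def1]]]|JM] := Mmax J idealJ MJ.
  have -> : b = b * m + r * (a * b) by rewrite -[b in LHS]mulr1 def1; ring.
  by apply: MD; apply: MM.
by case: Ma; apply: JM; exists 0, 1; rewrite mul1r add0r.
Qed.

Lemma maximal_ideal_exists (B : subs D) : is_ideal B -> ~ B 1 ->
  exists2 M, is_maximal_ideal M & forall x, B x -> M x.
Proof.
move=> [B0 [BD BM]] B1.
(* The empty set is allowed so that the union of the empty chain is admissible. *)
pose admissible : set (set D) := fun I =>
  [/\ (forall x y, I x -> I y -> I (x + y)), (forall r x, I x -> I (r * x)), ~ I 1 &
     (exists x, I x) -> forall x, B x -> I x].
have [|A [[AD AM A1 BA] Amax]] := @Zorn_bigcup D admissible.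
  move=> C Cadm Ctot; split.
  - move=> x y [X CX Xx] [Y CY Yy].
    have [XY|YX] := Ctot X Y CX CY.
      by exists Y => //; case: (Cadm Y CY) => YD _ _ _; apply: YD => //; apply: XY.
    by exists X => //; case: (Cadm X CX) => XD _ _ _; apply: XD => //; apply: YX.
  - by move=> r x [X CX Xx]; exists X => //; case: (Cadm X CX) => _ XM _ _; apply: XM.
  - by move=> [X CX X1]; case: (Cadm X CX) => _ _ + _; apply.
  - move=> [x [X CX Xx]] y By; exists X => //; case: (Cadm X CX) => _ _ _ BX.
    by apply: BX => //; exists x.
have BsubA : forall x, B x -> A x.
  apply: BA; apply: contrapT => Aempty.
  apply: (Amax B); last by split.
  split=> [t At|AB]; first by case: Aempty; exists t.
  by apply: Aempty; exists 0; apply: AB.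
exists A => //; split; first by split; [apply: BsubA | split].
split=> // J [J0 [JD JM]] AJ.
have [J1|J1] := pselect (J 1); [by left | right].
apply: contrapT => JA; apply: (Amax J); first by split.
by split=> // _ x /BsubA /AJ.
Qed.

End MaximalIdeals.

Lemma seq_choice (A B : Type) (P : B -> Prop) (R : A -> B -> Prop) (s : seq A) :
  (forall x, List.In x s -> exists2 y, P y & R x y) ->
  exists2 t : seq B, (forall y, List.In y t -> P y) &
    forall x, List.In x s -> exists2 y, List.In y t & R x y.
Proof.
elim: s => [|x s IHs] HR; first by exists [::].
have [t Pt Rt] := IHs (fun x' s_x' => HR x' (or_intror s_x')).
have [y Py Rxy] := HR x (or_introl erefl).
exists (y :: t); first by move=> y' [<-|/Pt].
move=> x' [<-|/Rt [y' t_y' Ry']]; first by exists y; [left|].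
by exists y'; [right|].
Qed.

Section FractionalIdeals.
Variable D : idomainType.
Local Notation K := {fraction D}.

Definition colon (I : subs K) : subs K := fun y => forall x, I x -> Dsub (y * x).

Variable I : subs K.
Hypothesis fracI : fractional_ideal I.

Lemma fractional_colon : fractional_ideal (colon I).
Proof.
have [I0 ID IM [x Ix x0] [d d0 dI]] := fracI.
split.
- by move=> z _; rewrite mul0r -emb0; apply: Dsub_emb.
- by move=> y y' Hy Hy' z Iz; rewrite mulrDl; apply: Dsub_add; [apply: Hy | apply: Hy'].
- by move=> r y Hy z Iz; rewrite -mulrA; apply: Dsub_mul; [apply: Dsub_emb | apply: Hy].
- exists (emb d); first by move=> z /dI.
  by rewrite emb_eq0.
have [c def_c] := dI x Ix.
exists c; first by rewrite -emb_eq0 -def_c mulf_neq0 ?emb_eq0.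
move=> y Hy; rewrite -def_c [emb d * x]mulrC mulrAC [x * y]mulrC.
by apply: Dsub_mul; [apply: Hy | apply: Dsub_emb].
Qed.

Lemma ideal_prod_colon_Dsub x : ideal_prod I (colon I) x -> Dsub x.
Proof.
move=> [s [Hs ->]]; apply: Dsub_sum => p /Hs [Ip1 colon_p2].
by rewrite mulrC; apply: colon_p2.
Qed.

Lemma ideal_prod_colon_ideal : is_ideal (fun c : D => ideal_prod I (colon I) (emb c)).
Proof.
have [_ _ IM _ _] := fracI.
split; first by exists [::]; rewrite big_nil emb0.
split=> [x y [s [Hs def_x]] [t [Ht def_y]] | r x [s [Hs def_x]]].
  exists (s ++ t); rewrite embD def_x def_y big_cat; split=> // p st_p.
  by case: (List.in_app_or _ _ _ st_p); [apply: Hs | apply: Ht].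
exists (map (fun p => (emb r * p.1, p.2)) s); split.
  move=> p /List.in_map_iff [q [<- s_q]] /=.
  by have [Iq1 colon_q2] := Hs q s_q; split; [apply: IM | ].
by rewrite embM def_x big_map mulr_sumr; apply: eq_bigr => p _; rewrite mulrA.
Qed.

Lemma invertible_colon : ideal_prod I (colon I) 1 -> invertible_frac I.
Proof.
move=> prod1; split=> //; exists (colon I); first exact: fractional_colon.
move=> x; split; first exact: ideal_prod_colon_Dsub.
move=> [d ->]; have [_ [_ idealM]] := ideal_prod_colon_ideal.
by rewrite -[d]mulr1; apply: idealM; rewrite emb1.
Qed.

End FractionalIdeals.

Section CommonMultiples.
Variables (D : idomainType) (a b : D).
Local Notation K := {fraction D}.
Local Notation dvdD := (dvd_in (fun _ : D => True)).

Definition common_multiple (i : D) : Prop := dvdD a i /\ dvdD b i.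

Definition inter_ideal : subs K := fun x => exists2 i, common_multiple i & x = emb i.

Lemma common_multipleM r i : common_multiple i -> common_multiple (r * i).
Proof.
move=> [[u _ def_i] [v _ def_i']].
by split; [exists (r * u); rewrite // def_i | exists (r * v); rewrite // def_i']; rewrite mulrCA.
Qed.

Lemma common_multipleD i j :
  common_multiple i -> common_multiple j -> common_multiple (i + j).
Proof.
move=> [[u _ ->] [v _ def_i]] [[u' _ ->] [v' _ def_j]].
by split; [exists (u + u') | exists (v + v')]; rewrite // mulrDr // -def_i -def_j.
Qed.

Lemma common_multiple_mul : common_multiple (a * b).
Proof. by split; [exists b | exists a; rewrite // mulrC]. Qed.

Lemma fractional_inter : a != 0 -> b != 0 -> fractional_ideal inter_ideal.
Proof.
move=> a0 b0; split.
- exists 0; last by rewrite emb0.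
  by rewrite -(mul0r (a * b)); apply/common_multipleM/common_multiple_mul.
- by move=> _ _ [i cm_i ->] [j cm_j ->]; exists (i + j); rewrite ?embD //; apply: common_multipleD.
- by move=> r _ [i cm_i ->]; exists (r * i); rewrite ?embM //; apply: common_multipleM.
- exists (emb (a * b)); first by exists (a * b); first exact: common_multiple_mul.
  by rewrite emb_eq0 mulf_neq0.
- by exists 1; rewrite ?oner_eq0 // => _ [i _ ->]; rewrite emb1 mul1r; apply: Dsub_emb.
Qed.

Lemma lcm_of_principal : principal_frac inter_ideal ->
  exists l, is_lcm_in (fun _ : D => True) a b l.
Proof.
move=> [g inter_g].
have [l cm_l def_g] : inter_ideal g by apply/inter_g; exists 1; rewrite emb1 mulr1.
exists l; split=> //; try by case: cm_l.
move=> i _ ai bi; have /inter_g [d def_i] : inter_ideal (emb i) by exists i.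
by exists d => //; apply: emb_inj; rewrite embM -def_g.
Qed.

End CommonMultiples.

Section InvertibleIntersection.
Variable D : idomainType.
Local Notation K := {fraction D}.
Hypothesis locGCD : forall M : subs D, is_maximal_ideal M -> gcd_domain_on (loc M).
Variables (a b : D).
Hypotheses (a0 : a != 0) (b0 : b != 0).

(* l is the lcm of a and b in D_M, for a maximal ideal M above P, cleared of denominators. *)
Lemma local_lcm (P : subs D) : is_prime_ideal P ->
  exists l, [/\ common_multiple a b l, l != 0 &
    forall i, common_multiple a b i -> loc P (emb i / emb l)].
Proof.
move=> primeP; have [idealP [P1 _]] := primeP.
have [M maxM PM] := maximal_ideal_exists idealP P1.
have primeM := maximal_ideal_prime maxM.
have [ea0 eb0] : emb a != 0 /\ emb b != 0 by rewrite !emb_eq0.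
have [L L0 [_ [x locx def_L] [x' locx' def_L'] Lmin]] :=
  lcm_in_exists (loc_mul primeM) (locGCD maxM) (loc_emb primeM a)
    (loc_emb primeM b) ea0 eb0.
have [w Mw clear_w] : exists2 w, ~ M w & forall z, List.In z [:: x; x'] -> Dsub (emb w * z).
  by apply: loc_clear_denominators => // z [<-|[<-|[]]].
have [[c def_c] [c' def_c']] := (clear_w x (or_introl erefl),
  clear_w x' (or_intror (or_introl erefl))).
have def_l : emb (a * c) = emb w * L by rewrite embM -def_c mulrCA -def_L.
exists (a * c); split.
- split; first by exists c.
  by exists c' => //; apply: emb_inj; rewrite def_l embM -def_c' def_L' mulrCA.
- by rewrite -emb_eq0 def_l mulf_neq0 // emb_eq0 (prime_notin_neq0 primeM).
move=> i [ai bi]; apply: (loc_subset PM).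
have [z locz def_i] := Lmin _ (loc_emb primeM i) (loc_dvd_emb primeM ai)
  (loc_dvd_emb primeM bi).
rewrite def_l def_i [emb w * L]mulrC invfM mulrA [L * z]mulrC mulfK //.
apply: loc_mul => //.
by exists 1, w; rewrite emb1 div1r.
Qed.

Variable F : subs (subs D).
Hypothesis F_prime : forall P, F P -> is_prime_ideal P /\ nonzero_ideal P.
Hypothesis D_inter : forall x : K, Dsub x <-> (forall P, F P -> loc P x).
Hypothesis F_lf : locally_finite F.

Let ab0 : a * b != 0. Proof. exact: mulf_neq0. Qed.

Let mul_div_cancel (y x z : K) : z != 0 -> y * x = (y * z) * (x / z).
Proof. by move=> z0; rewrite -mulrA [z * _]mulrC divfK. Qed.

(* Membership of y in (D : aD \cap bD) is decided by finitely many common multiples: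
   [a * b] handles the members of F avoiding [a * b], and one local generator
   handles each of the finitely many members containing it. *)
Lemma colon_inter_finite_test :
  exists2 J : seq D, (forall j, List.In j J -> common_multiple a b j) &
    forall y, Dsub (y * emb (a * b)) -> (forall j, List.In j J -> Dsub (y * emb j)) ->
    colon (inter_ideal a b) y.
Proof.
have [s Hs] := F_lf ab0.
have local_gen Q : exists2 l, common_multiple a b l /\ l != 0 &
    F Q -> forall i, common_multiple a b i -> loc Q (emb i / emb l).
  have [FQ|FQ] := pselect (F Q); last first.
    by exists (a * b) => [|/FQ //]; split; [exact: common_multiple_mul | exact: ab0].
  by have [l [cm_l l0 Hl]] := local_lcm (proj1 (F_prime FQ)); exists l.
have [J J_gen J_loc] := seq_choice (s := s) (fun Q _ => local_gen Q).
exists J => [j /J_gen [] //|y yab yJ _ [i cm_i ->]].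
apply/D_inter => P FP; have [primeP _] := F_prime FP.
have [Pab|Pab] := pselect (P (a * b)).
  have [Q s_Q /predeqP eqPQ] := Hs P FP Pab; subst Q.
  have [l J_l Hl] := J_loc P s_Q; have [_ l0] := J_gen l J_l.
  rewrite (mul_div_cancel _ _ (z := emb l)) ?emb_eq0 //.
  by apply: loc_mul => //; [apply/loc_Dsub/yJ | apply: Hl].
rewrite (mul_div_cancel _ _ (z := emb (a * b))) ?emb_eq0 //.
by apply: loc_mul => //; [apply: loc_Dsub | exists i, (a * b)].
Qed.

Lemma local_colon_witness (M : subs D) : is_maximal_ideal M ->
  exists2 c, ~ M c & ideal_prod (inter_ideal a b) (colon (inter_ideal a b)) (emb c).
Proof.
move=> maxM; have primeM := maximal_ideal_prime maxM.
have [l [cm_l l0 Hl]] := local_lcm primeM.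
have [J J_cm J_test] := colon_inter_finite_test.
have [w Mw clear_w] :
    exists2 w, ~ M w & forall z, List.In z (List.map (fun j => emb j / emb l) (a * b :: J)) ->
      Dsub (emb w * z).
  apply: loc_clear_denominators => // z /List.in_map_iff [j [<- abJ_j]]; apply: Hl.
  by case: abJ_j => [<-|/J_cm //]; apply: common_multiple_mul.
have colon_y : colon (inter_ideal a b) (emb w / emb l).
  apply: J_test => [|j J_j]; rewrite mulrAC -mulrA; apply: clear_w;
    apply/List.in_map_iff; by [exists (a * b); split; [|left] | exists j; split; [|right]].
exists w => //; exists [:: (emb l, emb w / emb l)]; split.
  by move=> _ [<-|[]]; split=> //; exists l.
by rewrite big_cons big_nil addr0 mulrC divfK // emb_eq0.
Qed.

Lemma inter_colon_one : ideal_prod (inter_ideal a b) (colon (inter_ideal a b)) 1.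
Proof.
apply: contrapT; rewrite -emb1 => not1.
have [M maxM BM] := maximal_ideal_exists
  (ideal_prod_colon_ideal (fractional_inter a0 b0)) not1.
by have [c Mc /BM] := local_colon_witness maxM.
Qed.

End InvertibleIntersection.

Theorem mainTheorem19 (D : idomainType)
  (HlocGCD : forall M : subs D, is_maximal_ideal M -> gcd_domain_on (loc M))
  (F : subs (subs D))
  (HFprime : forall P, F P -> is_prime_ideal P /\ nonzero_ideal P)
  (Hinter : forall x : {fraction D}, Dsub x <-> (forall P, F P -> loc P x))
  (Hlf : locally_finite F)
  (Hcl : trivial_class_group D) :
  gcd_domain D.
Proof.
move=> a b _ _ a0 b0.
have invertible_inter : invertible_frac (inter_ideal a b).
  apply: (invertible_colon (fractional_inter a0 b0)).
  exact: (inter_colon_one HlocGCD a0 b0 HFprime Hinter Hlf).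
have [l lcm_l] := lcm_of_principal (Hcl _ invertible_inter).
exact: gcd_of_lcm lcm_l.
Qed.
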